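(* Assume $n\ge3$. Let $\phi=\sum_{a\in\{1,\dots,n\}^\ell}c_a\,x^{a_1}\cdots x^{a_\ell}$ ($c_a\in\mathbb{C}$) be a homogeneous polynomial of degree $\ell$ satisfying $\sum_{b,c}\eta^{bc}\partial_b\partial_c\phi=0$, and let $\tilde\phi=\sum_a c_a\,\tilde x^{a_1}\tilde x^{a_2}\cdots\tilde x^{a_\ell}$ (composition of operators). Then $\tilde\phi(1)=\phi$.
   Context: $(\eta_{ab})$ is a non-degenerate symmetric complex $n\times n$ matrix with inverse $(\eta^{ab})$; $\partial_a=\partial/\partial x^a$, $\partial^a=\sum_b\eta^{ab}\partial_b$, $x_bx^b=\sum_{b,c}\eta_{bc}x^bx^c$. $H=-\frac12\sum_a(x^a\partial_a+\partial_ax^a)$ acts on homogeneous polynomials of degree $d$ by the scalar $-d-\frac n2$. The operator $\tilde x^a$ on $\mathbb{C}[x^1,\dots,x^n]$ is $\tilde x^a=x^a+\frac1{2H+4}\,x_bx^b\,\partial^a$ (the element $P(x^a+I)$ of the reduction algebra): explicitly, for $\psi$ homogeneous of degree $d\ge1$, $\tilde x^a\psi=x^a\psi+\frac{1}{2-2d-n}\,x_bx^b\,\partial^a\psi$, and $\tilde x^a\psi=x^a\psi$ for $\psi$ constant. *)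

From mathcomp Require Import all_boot all_order all_algebra.
From mathcomp Require Import mpoly.
Set Implicit Arguments. Unset Strict Implicit. Unset Printing Implicit Defensive.
Import Order.TTheory GRing.Theory Num.Theory.
Local Open Scope ring_scope.

(* Coefficient field: any numeric algebraically closed field (e.g. C). *)
Section Reduction.
Variables (F : numClosedFieldType) (n : nat) (eta : 'M[F]_n).

Definition etainv : 'M[F]_n := invmx eta.

Definition xsq : {mpoly F[n]} :=
  \sum_(b < n) \sum_(c < n) eta b c *: ('X_b * 'X_c).

Definition dup (a : 'I_n) (p : {mpoly F[n]}) : {mpoly F[n]} :=
  \sum_(b < n) etainv a b *: p^`M(b).

(* tilde x^a on a homogeneous polynomial psi of degree d *)
Definition tx_hom (a : 'I_n) (d : nat) (psi : {mpoly F[n]}) : {mpoly F[n]} :=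
  if d is 0 then 'X_a * psi
  else 'X_a * psi + (2%:R - (2 * d)%:R - n%:R)^-1 *: (xsq * dup a psi).

(* tilde x^a on C[x^1..x^n], extended linearly from monomials
   (each monomial 'X_[m] is homogeneous of degree mdeg m) *)
Definition tx (a : 'I_n) (p : {mpoly F[n]}) : {mpoly F[n]} :=
  \sum_(m <- msupp p) p@_m *: tx_hom a (mdeg m) 'X_[m].

Definition laplace (p : {mpoly F[n]}) : {mpoly F[n]} :=
  \sum_(b < n) \sum_(c < n) etainv b c *: (p^`M(c))^`M(b).

Definition phi_of (l : nat) (c : l.-tuple 'I_n -> F) : {mpoly F[n]} :=
  \sum_(a : l.-tuple 'I_n) c a *: \prod_(i <- a) 'X_i.

Definition tphi_one (l : nat) (c : l.-tuple 'I_n -> F) : {mpoly F[n]} :=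
  \sum_(a : l.-tuple 'I_n) c a *: foldr (fun i acc => tx i acc) 1 a.
End Reduction.

From HB Require Import structures.
From mathcomp Require Import all_boot all_order all_algebra.
From mathcomp Require Import mpoly.
From mathcomp Require Import ring.
Set Implicit Arguments. Unset Strict Implicit. Unset Printing Implicit Defensive.
Import Order.TTheory GRing.Theory Num.Theory.
Local Open Scope ring_scope.

(* Write r^2 = x_b x^b.  By induction on the word a, the polynomial
   x~^{a_1} ... x~^{a_l} (1) is homogeneous of degree l, harmonic (the factor
   1/(2H+4) in x~^a is precisely the one for which x~^a preserves harmonic
   homogeneous polynomials), and differs from x^{a_1} ... x^{a_l} by r^2 Q with Q
   homogeneous of degree l - 2.  Hence phi~(1) - phi = r^2 Q is harmonic.  Since
   Delta (r^2 Q) = (2n + 4d) Q + r^2 Delta Q for Q of degree d, iterating the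
   Laplacian shows that r^2 Q can only be harmonic when Q = 0. *)

Lemma sumr_pred1 (V : nmodType) (I : finType) (k : I) (f : I -> V) :
  \sum_(i : I) (if i == k then f i else 0) = f k.
Proof. by rewrite -big_mkcond big_pred1_eq. Qed.

Section MPolyDerivative.
Variables (R : comNzRingType) (n : nat).
Implicit Types (p : {mpoly R[n]}) (m : 'X_{1..n}).

Lemma mderivXU (i j : 'I_n) : ('X_i : {mpoly R[n]})^`M(j) = (i == j)%:R.
Proof.
rewrite mderivX mnm1E; case: eqP => [->|_]; last by rewrite scale0r.
by rewrite -{1}[U_(j)%MM]add0m addmK mpolyX0 scale1r.
Qed.

Lemma mderivXUM (i j : 'I_n) p :
  ('X_i * p)^`M(j) = (if i == j then p else 0) + 'X_i * p^`M(j).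
Proof. by rewrite mderivM mderivXU; case: eqP; rewrite ?mul1r ?mul0r. Qed.

Lemma mdeg_subU m (i : 'I_n) : m i != 0%N -> mdeg (m - U_(i))%MM = (mdeg m).-1.
Proof. by move=> mi; rewrite -{2}(@submK _ U_(i)%MM m) ?lep1mP // mdegD mdeg1 addn1. Qed.

Lemma mderiv_dhomog d (i : 'I_n) p : p \is d.-homog -> p^`M(i) \is d.-1.-homog.
Proof.
move=> /dhomogP hp; rewrite /mderiv big_seq; apply: rpred_sum => m mp.
have [->|mi] := eqVneq (m i) 0%N; first by rewrite mul0r scale0r rpred0.
apply: rpredZ; rewrite dhomogX; change (mdeg (m - U_(i))%MM == d.-1).
by rewrite mdeg_subU // hp.
Qed.

Lemma mderiv_dhomog0 (i : 'I_n) p : p \is 0.-homog -> p^`M(i) = 0.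
Proof.
move=> /dhomogP hp; rewrite /mderiv big_seq big1 // => m /hp /eqP.
by rewrite mdeg_eq0 => /eqP ->; rewrite mnm0E mul0r scale0r.
Qed.

Lemma mpoly_euler d p : p \is d.-homog -> \sum_(i < n) 'X_i * p^`M(i) = d%:R *: p.
Proof.
move=> /dhomogP hp.
have eulerX m : \sum_(i < n) 'X_i * ('X_[m] : {mpoly R[n]})^`M(i) = (mdeg m)%:R *: 'X_[m].
  rewrite mdegE natr_sum scaler_suml; apply: eq_bigr => i _.
  rewrite mderivX -scalerAr; have [->|mi] := eqVneq (m i) 0%N; first by rewrite !scale0r.
  by rewrite -mpolyXD addmC submK ?lep1mP.
rewrite {1 2}[p]mpolyE scaler_sumr.
under eq_bigr do rewrite raddf_sum mulr_sumr.
rewrite exchange_big /= big_seq [RHS]big_seq; apply: eq_bigr => m mp.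
under eq_bigr do rewrite mderivZ -scalerAr.
by rewrite -scaler_sumr eulerX !scalerA mulrC hp.
Qed.

Lemma dhomogXU (i : 'I_n) : ('X_i : {mpoly R[n]}) \is 1.-homog.
Proof. by rewrite dhomogX; apply/eqP; apply: mdeg1. Qed.

End MPolyDerivative.

Section Laplacian.
Variables (F : numClosedFieldType) (n : nat) (eta : 'M[F]_n).
Hypotheses (eta_sym : eta^T = eta) (eta_unit : eta \in unitmx).
Implicit Types (p g : {mpoly F[n]}).

Local Notation e := (etainv eta).

Lemma etainv_sym i j : e i j = e j i.
Proof. by rewrite /etainv -{1}eta_sym -trmx_inv mxE. Qed.

Lemma etainv_mulE a c : \sum_b e a b * eta b c = (a == c)%:R.
Proof. by have := congr1 (fun M : 'M[F]_n => M a c) (mulVmx eta_unit); rewrite !mxE. Qed.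

Definition xlow (c : 'I_n) : {mpoly F[n]} := \sum_(q < n) eta c q *: 'X_q.

Lemma xsqE : xsq eta = \sum_(b < n) 'X_b * xlow b.
Proof.
by apply: eq_bigr => b _; rewrite mulr_sumr; apply: eq_bigr => c _; rewrite scalerAr.
Qed.

Lemma sum_etainv_xlow b : \sum_(c < n) e b c *: xlow c = 'X_b.
Proof.
rewrite /xlow; under eq_bigr do rewrite scaler_sumr.
rewrite exchange_big /=.
under eq_bigr do (under eq_bigr do rewrite scalerA; rewrite -scaler_suml etainv_mulE).
rewrite -(sumr_pred1 b (fun q => 'X_q)); apply: eq_bigr => q _.
by rewrite eq_sym; case: eqP; rewrite ?scale1r ?scale0r.
Qed.

Lemma mderiv_xlow c b : (xlow c)^`M(b) = eta c b *: 1.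
Proof.
rewrite raddf_sum /= -(sumr_pred1 b (fun q => eta c q *: (1 : {mpoly F[n]}))).
by apply: eq_bigr => q _; rewrite mderivZ mderivXU; case: eqP; rewrite ?scaler0.
Qed.

Lemma mderiv_xsq c : (xsq eta)^`M(c) = 2%:R *: xlow c.
Proof.
rewrite xsqE raddf_sum /=.
under eq_bigr do rewrite mderivXUM mderiv_xlow.
rewrite big_split /= sumr_pred1 mulr2n scalerDl scale1r; congr (_ + _).
by apply: eq_bigr => b _; rewrite -scalerCA mulr1 -{1}eta_sym mxE.
Qed.

Definition dot_grad p g : {mpoly F[n]} :=
  \sum_(b < n) \sum_(c < n) e b c *: (p^`M(b) * g^`M(c)).

Lemma lapM p g :
  laplace eta (p * g) = laplace eta p * g + 2%:R *: dot_grad p g + p * laplace eta g.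
Proof.
have dot_gradC : dot_grad g p = dot_grad p g.
  rewrite /dot_grad exchange_big; apply: eq_bigr => b _; apply: eq_bigr => c _.
  by rewrite etainv_sym mulrC.
rewrite mulr2n scalerDl scale1r {2}/dot_grad -dot_gradC /laplace /dot_grad.
rewrite mulr_suml mulr_sumr -!big_split; apply: eq_bigr => b _.
rewrite mulr_suml mulr_sumr -!big_split; apply: eq_bigr => c _ /=.
rewrite !mderivM !mderivD !mderivM -scalerAl -scalerAr [g^`M(b) * _]mulrC.
by rewrite !scalerDr !addrA.
Qed.

Lemma laplace_is_linear : linear (laplace eta).
Proof.
move=> a p g; rewrite /laplace scaler_sumr -big_split; apply: eq_bigr => b _.
rewrite scaler_sumr -big_split; apply: eq_bigr => c _.
by rewrite !(mderivD, mderivZ) scalerDr !scalerA mulrC.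
Qed.

HB.instance Definition _ := GRing.isLinear.Build F {mpoly F[n]} {mpoly F[n]} _
  (laplace eta) laplace_is_linear.

Lemma dup_is_linear a : linear (dup eta a).
Proof.
move=> k p g; rewrite /dup scaler_sumr -big_split; apply: eq_bigr => b _.
by rewrite !(mderivD, mderivZ) scalerDr !scalerA mulrC.
Qed.

HB.instance Definition _ a := GRing.isLinear.Build F {mpoly F[n]} {mpoly F[n]} _
  (dup eta a) (dup_is_linear a).

Lemma lap_mderiv b p : laplace eta p^`M(b) = (laplace eta p)^`M(b).
Proof.
rewrite /laplace raddf_sum /=; apply: eq_bigr => c _.
rewrite raddf_sum /=; apply: eq_bigr => c' _.
by rewrite mderivZ (mderiv_comm b c' p) (mderiv_comm b c).
Qed.

Lemma lap_dup a p : laplace eta (dup eta a p) = dup eta a (laplace eta p).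
Proof. by rewrite /dup linear_sum; apply: eq_bigr => b _; rewrite linearZ /= lap_mderiv. Qed.

Lemma lapX i : laplace eta 'X_i = 0.
Proof.
apply: big1 => b _; apply: big1 => c _.
by rewrite mderivXU mderivMn -mpolyC1 mderivC mul0rn scaler0.
Qed.

Lemma dot_gradX i p : dot_grad 'X_i p = dup eta i p.
Proof.
rewrite /dot_grad /dup -(sumr_pred1 i (fun b => \sum_(c < n) e b c *: p^`M(c))).
apply: eq_bigr => b _; rewrite mderivXU eq_sym; case: eqP => _.
  by under eq_bigr do rewrite mul1r.
by rewrite big1 // => c _; rewrite mul0r scaler0.
Qed.

Lemma lap_xsq : laplace eta (xsq eta) = (2 * n)%:R.
Proof.
rewrite /laplace.
under eq_bigr => b _ do under eq_bigr => c _ do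
  rewrite mderiv_xsq mderivZ mderiv_xlow !scalerA mulrAC.
under eq_bigr => b _ do rewrite -scaler_suml -mulr_suml etainv_mulE eqxx mul1r.
by rewrite sumr_const card_ord scaler_nat -mulrnA.
Qed.

Lemma dot_grad_xsq g : dot_grad (xsq eta) g = 2%:R *: \sum_(c < n) 'X_c * g^`M(c).
Proof.
rewrite /dot_grad exchange_big scaler_sumr; apply: eq_bigr => c _ /=.
under eq_bigr do
  rewrite mderiv_xsq -scalerAl scalerA [e _ _ * _]mulrC -scalerA scalerAl etainv_sym.
by rewrite -scaler_sumr -mulr_suml sum_etainv_xlow.
Qed.

Lemma lapXM i p : laplace eta ('X_i * p) = 2%:R *: dup eta i p + 'X_i * laplace eta p.
Proof. by rewrite lapM lapX mul0r add0r dot_gradX. Qed.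

Lemma lap_xsqM d g : g \is d.-homog ->
  laplace eta (xsq eta * g) = (2 * n + 4 * d)%:R *: g + xsq eta * laplace eta g.
Proof.
move=> hg; rewrite lapM lap_xsq dot_grad_xsq (mpoly_euler hg) mulr_natl -scaler_nat.
rewrite !scalerA -scalerDl; congr (_ *: _ + _).
by rewrite natrD !natrM; ring.
Qed.

Lemma xsq_dhomog : xsq eta \is 2.-homog.
Proof.
apply: rpred_sum => b _; apply: rpred_sum => c _; apply: rpredZ.
exact: dhomogM (dhomogXU _ b) (dhomogXU _ c).
Qed.

Lemma dup_dhomog d a p : p \is d.-homog -> dup eta a p \is d.-1.-homog.
Proof. by move=> hp; apply: rpred_sum => b _; apply/rpredZ/mderiv_dhomog. Qed.

Lemma dup_dhomog0 a p : p \is 0.-homog -> dup eta a p = 0.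
Proof. by move=> hp; apply: big1 => b _; rewrite mderiv_dhomog0 ?scaler0. Qed.

Lemma lap_dhomog d p : p \is d.-homog -> laplace eta p \is d.-2.-homog.
Proof.
move=> hp; apply: rpred_sum => b _; apply: rpred_sum => c _; apply: rpredZ.
exact/mderiv_dhomog/mderiv_dhomog.
Qed.

Lemma lap_dhomog_lt2 d p : p \is d.-homog -> (d < 2)%N -> laplace eta p = 0.
Proof.
move=> hp; case: d hp => [|[|//]] hp _; apply: big1 => b _; apply: big1 => c _.
  by rewrite (mderiv_dhomog0 c hp) mderiv0 scaler0.
by rewrite (mderiv_dhomog0 b (mderiv_dhomog c hp)) scaler0.
Qed.

Hypothesis n_gt0 : (0 < n)%N.

(* Applying the Laplacian to (2n + 4d) Q + r^2 Delta Q = - N Q gives an equation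
   of the same shape for Delta Q, of degree d - 2, with N + 2n + 4d in place of N;
   so Delta Q = 0 by induction, and then (N + 2n + 4d) Q = 0. *)
Lemma lap_xsqM_eq_oppn_eq0 d Q (N : nat) :
  Q \is d.-homog -> laplace eta (xsq eta * Q) = - N%:R *: Q -> Q = 0.
Proof.
elim/ltn_ind: d Q N => d IH Q N hQ hL.
rewrite (lap_xsqM hQ) in hL.
have lapQ_eq0 : laplace eta Q = 0.
  have [d_lt2|d_ge2] := ltnP d 2; first exact: lap_dhomog_lt2 hQ d_lt2.
  apply: (IH d.-2 _ _ (N + (2 * n + 4 * d))%N (lap_dhomog hQ)).
    by rewrite -subn2 ltn_subrL (ltnW d_ge2).
  have := congr1 (laplace eta) hL; rewrite linearD !linearZ /= => h.
  apply: (addrI ((2 * n + 4 * d)%:R *: laplace eta Q)); rewrite h -scalerDl.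
  by congr (_ *: _); rewrite natrD; ring.
move: hL; rewrite lapQ_eq0 mulr0 addr0 => /eqP; rewrite -subr_eq0 -scalerBl scaler_eq0.
have pos : (0 < 2 * n + 4 * d + N)%N by apply/ltn_addr/ltn_addr; rewrite muln_gt0 n_gt0.
by rewrite opprK -natrD pnatr_eq0 eqn0Ngt pos /= => /eqP.
Qed.

Lemma tx_hom_is_linear a d : linear (tx_hom eta a d).
Proof.
move=> k p g; case: d => [|d] /=; first by rewrite mulrDr scalerAr.
rewrite linearP /= !mulrDr !scalerDr -!scalerAr !scalerA [_ * k]mulrC.
by rewrite !addrA; congr (_ + _); rewrite -!addrA; congr (_ + _); rewrite addrC.
Qed.

HB.instance Definition _ a d := GRing.isLinear.Build F {mpoly F[n]} {mpoly F[n]} _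
  (tx_hom eta a d) (tx_hom_is_linear a d).

Lemma tx_dhomogE a d p : p \is d.-homog -> tx eta a p = tx_hom eta a d p.
Proof.
move=> /dhomogP hp; rewrite /tx [in RHS](mpolyE p) linear_sum /= big_seq [RHS]big_seq.
by apply: eq_bigr => m mp; rewrite linearZ /= hp.
Qed.

Lemma tx_hom_dhomogE d a p : p \is d.-homog ->
  tx_hom eta a d p = 'X_a * p + (2%:R - (2 * d)%:R - n%:R)^-1 *: (xsq eta * dup eta a p).
Proof. by case: d => [hp|//]; rewrite dup_dhomog0 // mulr0 scaler0 addr0. Qed.

Lemma tx_hom_dhomog d a p : p \is d.-homog -> tx_hom eta a d p \is d.+1.-homog.
Proof.
move=> hp; rewrite tx_hom_dhomogE //.
apply: rpredD; first exact: dhomogM (dhomogXU _ a) hp.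
case: d hp => [|d] hp; first by rewrite dup_dhomog0 // mulr0 scaler0 rpred0.
exact/rpredZ/(dhomogM xsq_dhomog (dup_dhomog a hp)).
Qed.

(* The coefficient (2 - 2d - n)^-1 is exactly the one for which the term 2 (dup a p)
   of Delta (x^a p) cancels the term (2n + 4(d - 1)) (dup a p) of Delta (r^2 dup a p). *)
Lemma lap_tx_hom d a p : p \is d.-homog -> laplace eta p = 0 ->
  laplace eta (tx_hom eta a d p) = 0.
Proof.
move=> hp hl; rewrite tx_hom_dhomogE // linearD linearZ /= lapXM hl mulr0 addr0.
case: d hp => [|k] hp.
  by rewrite dup_dhomog0 // mulr0 (linear0 (laplace eta)) !scaler0 addr0.
rewrite (lap_xsqM (dup_dhomog a hp)) lap_dup hl linear0 mulr0 addr0 scalerA -scalerDl.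
have -> : (2%:R - (2 * k.+1)%:R - n%:R : F) = - (2 * k + n)%:R.
  by rewrite !(natrD, natrM) mulrSr; ring.
have nz : (2 * k + n)%:R != 0 :> F by rewrite pnatr_eq0 -lt0n ltn_addl.
suff -> : 2%:R + (- (2 * k + n)%:R)^-1 * (2 * n + 4 * k)%:R = 0 :> F by rewrite scale0r.
by field; move: nz; rewrite !(natrD, natrM).
Qed.

Definition tx_word (s : seq 'I_n) : {mpoly F[n]} := foldr (fun i acc => tx eta i acc) 1 s.

Lemma tx_word_dhomog s : tx_word s \is (size s).-homog.
Proof.
elim: s => [|i s IH] /=; first exact: dhomog1.
by rewrite (tx_dhomogE _ IH); apply: tx_hom_dhomog.
Qed.

Lemma lap_tx_word s : laplace eta (tx_word s) = 0.
Proof.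
elim: s => [|i s IH] /=; first exact: lap_dhomog_lt2 (dhomog1 _ _) _.
by rewrite (tx_dhomogE _ (tx_word_dhomog s)); apply: lap_tx_hom (tx_word_dhomog s) IH.
Qed.

Lemma tx_word_decomp s : exists Q, [/\ Q \is (size s).-2.-homog,
  (size s < 2)%N -> Q = 0 & tx_word s = \prod_(i <- s) 'X_i + xsq eta * Q].
Proof.
elim: s => [|i s [Q [hQ Q0 hs]]] /=.
  by exists 0; rewrite rpred0 big_nil mulr0 addr0.
have hu := tx_word_dhomog s.
exists ('X_i * Q + (2%:R - (2 * size s)%:R - n%:R)^-1 *: dup eta i (tx_word s)); split.
- apply: rpredD; last exact/rpredZ/dup_dhomog.
  case: (size s) hQ Q0 => [|[|k]] hQ Q0; last exact: dhomogM (dhomogXU _ i) hQ;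
    by rewrite (Q0 isT) mulr0 rpred0.
- case: (size s) hu Q0 => [|k] hu Q0 // _.
  by rewrite Q0 // dup_dhomog0 // mulr0 scaler0 addr0.
- rewrite (tx_dhomogE _ hu) (tx_hom_dhomogE _ hu) big_cons {1}hs.
  by rewrite !mulrDr -addrA scalerAr mulrCA.
Qed.

Lemma tphi_one_sub_phi_of l (c : l.-tuple 'I_n -> F) :
  exists2 Q, Q \is l.-2.-homog & tphi_one eta c - phi_of c = xsq eta * Q.
Proof.
rewrite /tphi_one /phi_of -sumrB.
apply: (big_ind (fun x => exists2 Q, Q \is l.-2.-homog & x = xsq eta * Q)).
- by exists 0; rewrite ?rpred0 ?mulr0.
- by move=> _ _ [Q1 hQ1 ->] [Q2 hQ2 ->]; exists (Q1 + Q2); rewrite ?rpredD ?mulrDr.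
- move=> a _; have [Q [hQ _ ha]] := tx_word_decomp a.
  exists (c a *: Q); first by rewrite -(size_tuple a) rpredZ.
  by rewrite -scalerBr -/(tx_word a) ha addrC addKr scalerAr.
Qed.

Lemma lap_tphi_one l (c : l.-tuple 'I_n -> F) : laplace eta (tphi_one eta c) = 0.
Proof.
by rewrite linear_sum big1 // => a _; rewrite linearZ /= -/(tx_word a) lap_tx_word scaler0.
Qed.

End Laplacian.

Theorem mainTheorem9 (F : numClosedFieldType) (n : nat) (eta : 'M[F]_n)
  (hn : (3 <= n)%N) (heta_sym : eta^T = eta) (heta_inv : eta \in unitmx)
  (l : nat) (c : l.-tuple 'I_n -> F)
  (hharm : laplace eta (phi_of c) = 0) :
  tphi_one eta c = phi_of c.
Proof.
have n_gt0 : (0 < n)%N by apply: leq_trans hn.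
have [Q hQ hdiff] := tphi_one_sub_phi_of eta c.
have lap_diff : laplace eta (xsq eta * Q) = 0.
  by rewrite -hdiff linearB /= hharm (lap_tphi_one heta_sym heta_inv n_gt0) subr0.
have Q0 : Q = 0.
  apply: (lap_xsqM_eq_oppn_eq0 heta_sym heta_inv n_gt0 hQ (N := 0)).
  by rewrite lap_diff oppr0 scale0r.
by apply/eqP; rewrite -subr_eq0 hdiff Q0 mulr0.
Qed.
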